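(* Let $N$ be finite, $\mathbf P$ stochastic on $N$, $0<\beta<1$, $\mathbf R\in\mathbb R^N$, $S\subseteq N$. Let $(a_i)_{i\in N}$ and $(b_i)_{i\in N}$ be the unique solutions of $$a_i=\beta R_i+\beta\sum_{j\in S}p_{ij}a_j,\qquad b_i=\beta+\beta\sum_{j\in S}p_{ij}b_j,\qquad i\in N.$$ Then $a_i=\beta r_i^S/(1-\beta)$ and $b_i=\beta w_i^S/(1-\beta)$ for $i\in S$, and $a_i=\beta r_i^S$, $b_i=\beta w_i^S$ for $i\in S^c$. In particular $a_i/b_i=\nu_i^S$ for all $i\in N$.
   Context: $N$ finite, $\mathbf P=(p_{ij})$ stochastic, $\beta\in(0,1)$, $\mathbf R=(R_j)$; $X(t)$ the Markov chain with matrix $\mathbf P$, $\mathsf E_i$ expectation given $X(0)=i$, $S^c=N\setminus S$. For $S\subseteq N$, $\tau_S=\min\{t\ge0:X(t)\notin S\}$, $f_i^S=\mathsf{E}_i[\sum_{t=0}^{\tau_S-1}R_{X(t)}\beta^t]$, $g_i^S=\mathsf{E}_i[\sum_{t=0}^{\tau_S-1}\beta^t]$, $w_i^S=1+\beta\sum_jp_{ij}g_j^S-\beta g_i^S$, $r_i^S=R_i+\beta\sum_jp_{ij}f_j^S-\beta f_i^S$, $\nu_i^S=r_i^S/w_i^S$. *)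

From HB Require Import structures.
From mathcomp Require Import all_boot all_order all_algebra.
From mathcomp Require Import all_classical all_reals all_analysis.
Set Implicit Arguments. Unset Strict Implicit. Unset Printing Implicit Defensive.
Import Order.TTheory GRing.Theory Num.Theory numFieldNormedType.Exports.
Local Open Scope ring_scope.

Section Defs.
Variables (R : realType) (N : finType).

Definition stochastic (P : N -> N -> R) : Prop :=
  (forall i j, 0 <= P i j) /\ (forall i, \sum_(j : N) P i j = 1).

Definition path_prob (P : N -> N -> R) (t : nat) (x : {ffun 'I_t.+1 -> N}) : R :=
  \prod_(k < t) P (x (inord k)) (x (inord k.+1)).

(* P_i( X(0),...,X(t) all in S and X(t) = j ) = P_i( t < tau_S, X(t) = j ),
   written as the sum of the probabilities of the corresponding paths. *)
Definition taboo_prob (P : N -> N -> R) (S : {set N}) (t : nat) (i j : N) : R :=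
  \sum_(x : {ffun 'I_t.+1 -> N} |
          [&& x ord0 == i, x ord_max == j & [forall k, x k \in S]])
     path_prob P x.

(* E_i [ sum_{t=0}^{tau_S - 1} c_{X(t)} beta^t ]
   = sum_{t >= 0} beta^t E_i[ 1{t < tau_S} c_{X(t)} ]. *)
Definition disc_reward (P : N -> N -> R) (beta : R) (S : {set N}) (c : N -> R)
    (i : N) : R :=
  limn (series (fun t => beta ^+ t * \sum_(j : N) taboo_prob P S t i j * c j)).

Definition fS P beta S (Rw : N -> R) i := disc_reward P beta S Rw i.
Definition gS P beta S i := disc_reward P beta S (fun _ => 1) i.

Definition wS P beta S (i : N) : R :=
  1 + beta * \sum_(j : N) P i j * gS P beta S j - beta * gS P beta S i.
Definition rS P beta S (Rw : N -> R) (i : N) : R :=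
  Rw i + beta * \sum_(j : N) P i j * fS P beta S Rw j - beta * fS P beta S Rw i.
Definition nuS P beta S Rw (i : N) : R := rS P beta S Rw i / wS P beta S i.

End Defs.

From HB Require Import structures.
From mathcomp Require Import all_boot all_order all_algebra.
From mathcomp Require Import all_classical all_reals all_analysis.
From mathcomp Require Import ring.
Import Order.TTheory GRing.Theory Num.Theory numFieldNormedType.Exports.
Set Implicit Arguments. Unset Strict Implicit. Unset Printing Implicit Defensive.
Local Open Scope ring_scope.
Local Open Scope classical_set_scope.

(* Write T for the taboo operator (T z)_i = 1{i in S} sum_k p_ik z_k.
   A first-step decomposition of the paths shows that the expected reward at
   time t before leaving S, E_i[1{t < tau_S} c(X(t))], is (T^t (1_S c))_i.
   Consequently any solution h of the fixpoint equation h = 1_S c + beta T h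
   is the discounted reward E_i[sum_{t < tau_S} beta^t c(X(t))]: the partial
   sums of that series equal h - beta^n T^n h, and T is non-expansive for the
   sup norm since P is stochastic, so the error term tends to 0.
   Given a solution a of a = beta c + beta P_S a, the vector h = 1_S a / beta
   solves that fixpoint equation; hence f^S = h, and substituting into the
   definition of r^S yields a_i = beta r_i^S / (1 - beta) on S and
   a_i = beta r_i^S off S.  The theorem applies this to c = R (giving a) and
   to c = 1 (giving b, since w^S is r^S for the unit reward); the ratio a/b
   is then nu^S because both share the same nonzero factor. *)

Section PathCons.
Variable N : finType.

Definition path_cons t (k : N) (y : {ffun 'I_t.+1 -> N}) : {ffun 'I_t.+2 -> N} :=
  [ffun m : 'I_t.+2 => if nat_of_ord m is m'.+1 then y (inord m') else k].

Lemma path_cons_head t k y : @path_cons t k y ord0 = k.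
Proof. by rewrite ffunE. Qed.

Lemma path_cons_tail t k y n :
  (n < t.+1)%N -> @path_cons t k y (inord n.+1) = y (inord n).
Proof. by move=> ltnt; rewrite ffunE inordK. Qed.

Lemma path_cons_last t k y : @path_cons t k y ord_max = y ord_max.
Proof. by rewrite ffunE /=; congr (y _); apply/val_inj; rewrite /= inordK. Qed.

Lemma path_cons_bij t :
  bijective (fun p : N * {ffun 'I_t.+1 -> N} => path_cons p.1 p.2).
Proof.
exists (fun x : {ffun 'I_t.+2 -> N} => (x ord0, [ffun m : 'I_t.+1 => x (inord m.+1)])).
  case=> k y /=; rewrite path_cons_head; congr pair; apply/ffunP => m.
  by rewrite ffunE path_cons_tail // inord_val.
move=> x; apply/ffunP => m; rewrite ffunE.
case: m => [[|m] ltm] /=; first by congr (x _); apply/val_inj.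
by rewrite ffunE; congr (x _); apply/val_inj; rewrite /= !inordK.
Qed.

Lemma path_cons_inS (S : {set N}) t k y :
  [forall m, @path_cons t k y m \in S] = (k \in S) && [forall m, y m \in S].
Proof.
apply/forallP/andP => [inS | [kS /forallP yS] m].
  split; first by have := inS ord0; rewrite path_cons_head.
  by apply/forallP => m; have := inS (inord m.+1); rewrite path_cons_tail ?inord_val.
by rewrite ffunE; case: m => [[|m] ltm] /=.
Qed.

End PathCons.

Section TabooRecursion.
Variables (R : realType) (N : finType) (P : N -> N -> R) (S : {set N}).

Lemma path_prob_cons t k y :
  path_prob P (@path_cons N t k y) = P k (y ord0) * path_prob P y.
Proof.
rewrite /path_prob big_ord_recl /=.
have cons_at0 : @path_cons N t k y (inord 0) = k by rewrite ffunE inordK.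
rewrite cons_at0 path_cons_tail //.
have -> : y (inord 0) = y ord0 by congr (y _); apply/val_inj; rewrite /= inordK.
congr (_ * _); apply: eq_bigr => m _.
have lt_mt : (m < t)%N := ltn_ord m.
by rewrite /bump leq0n add1n !path_cons_tail // ltnS //; apply: ltnW.
Qed.

Lemma taboo_prob0 i j : taboo_prob P S 0 i j = ((i == j) && (i \in S))%:R.
Proof.
rewrite /taboo_prob big_mkcond /=.
rewrite (reindex (fun k => [ffun _ : 'I_1 => k])); last first.
  exists (fun x : {ffun 'I_1 -> N} => x ord0) => x _; first by rewrite ffunE.
  by apply/ffunP => m; rewrite ffunE; congr (x _); apply/val_inj; case: m => [[]].
rewrite (bigD1 i) //= big1 ?addr0; last by move=> k /negbTE ki; rewrite ffunE ki.
have -> : [forall k : 'I_1, [ffun=> i] k \in S] = (i \in S).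
  by apply/forallP/idP => [/(_ ord0) | iS k]; rewrite ffunE.
by rewrite !ffunE eqxx /path_prob big_ord0; case: (i == j); case: (i \in S).
Qed.

Lemma taboo_probS t i j :
  taboo_prob P S t.+1 i j = (i \in S)%:R * \sum_k P i k * taboo_prob P S t k j.
Proof.
rewrite /taboo_prob big_mkcond (reindex _ (onW_bij _ (@path_cons_bij N t))) /=.
rewrite -(pair_bigA _ (fun k y =>
  if [&& @path_cons N t k y ord0 == i, path_cons k y ord_max == j
       & [forall m, path_cons k y m \in S]] then path_prob P (path_cons k y) else 0)).
under eq_bigr => k _ do under eq_bigr => y _ do
  rewrite path_cons_head path_cons_last path_cons_inS path_prob_cons.
rewrite (bigD1 i) //= [X in _ + X]big1 ?addr0; last first.
  by move=> k ki; apply: big1 => y _; rewrite (negbTE ki).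
under [in RHS]eq_bigr => k _ do rewrite big_mkcond mulr_sumr.
rewrite exchange_big /=; case: (boolP (i \in S)) => iS /=; last first.
  by rewrite mul0r; apply: big1 => y _; rewrite eqxx andbF.
rewrite mul1r; apply: eq_bigr => y _.
rewrite (bigD1 (y ord0)) //= big1 ?addr0; last first.
  by move=> k /negbTE ky; rewrite eq_sym ky mulr0.
by rewrite !eqxx /=; case: ifP; rewrite ?mulr0.
Qed.

Definition taboo_op (z : N -> R) (i : N) : R := (i \in S)%:R * \sum_k P i k * z k.

Definition step_reward (c : N -> R) (t : nat) (i : N) : R :=
  \sum_j taboo_prob P S t i j * c j.

Lemma step_reward0 c i : step_reward c 0 i = (i \in S)%:R * c i.
Proof.
rewrite /step_reward (bigD1 i) //= big1 ?addr0 ?taboo_prob0 ?eqxx //.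
by move=> j /negbTE ji; rewrite taboo_prob0 eq_sym ji mul0r.
Qed.

Lemma step_rewardS c t i : step_reward c t.+1 i = taboo_op (step_reward c t) i.
Proof.
rewrite /step_reward /taboo_op.
under eq_bigr do rewrite taboo_probS mulr_sumr mulr_suml.
rewrite exchange_big mulr_sumr; apply: eq_bigr => k _.
by rewrite !mulr_sumr; apply: eq_bigr => j _; rewrite !mulrA.
Qed.

Lemma taboo_op_lin (u v : N -> R) (x : R) i :
  taboo_op (fun k => u k + x * v k) i = taboo_op u i + x * taboo_op v i.
Proof.
rewrite /taboo_op [x * _]mulrCA -mulrDr; congr (_ * _).
by rewrite mulr_sumr -big_split /=; apply: eq_bigr => k _; ring.
Qed.

Lemma taboo_op_bounded (M : R) (z : N -> R) : stochastic P ->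
  (forall k, `|z k| <= M) -> forall i, `|taboo_op z i| <= M.
Proof.
move=> [P_ge0 P_sum1] zM i; rewrite /taboo_op normrM.
have M_ge0 : 0 <= M by apply: le_trans (zM i).
apply: (@le_trans _ _ `|\sum_k P i k * z k|).
  by case: (i \in S); rewrite ?normr1 ?mul1r // normr0 mul0r.
apply: le_trans (ler_norm_sum _ _ _) _.
rewrite -[M]mul1r -(P_sum1 i) mulr_suml; apply: ler_sum => k _.
by rewrite normrM ger0_norm // ler_wpM2l.
Qed.

End TabooRecursion.

Lemma geometric_damping_cvg0 (R : realType) (beta M : R) (u : R^nat) :
  0 <= beta < 1 -> (forall n, `|u n| <= M) -> (fun n => beta ^+ n * u n) @ \oo --> 0.
Proof.
move=> /andP[beta_ge0 beta_lt1] uM; apply/norm_cvg0P.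
apply: (squeeze_cvgr (f := cst 0) (h := fun n : nat => beta ^+ n * M)).
- near=> n; rewrite normr_ge0 /= normrM normrX ger0_norm //.
  by rewrite ler_wpM2l // exprn_ge0.
- exact: cvg_cst.
- by rewrite -(mul0r M); apply: cvgMr_tmp; apply: cvg_expr; rewrite ger0_norm.
Unshelve. all: by end_near.
Qed.

Section DiscountedReward.
Variables (R : realType) (N : finType) (P : N -> N -> R) (S : {set N}).
Variables (beta : R) (c h : N -> R).

Hypothesis h_fix : forall i, h i = (i \in S)%:R * c i + beta * taboo_op P S h i.

Lemma iter_taboo_op_fix n i :
  iter n (taboo_op P S) h i = step_reward P S c n i + beta * iter n.+1 (taboo_op P S) h i.
Proof.
elim: n i => [|n IHn] i; first by rewrite step_reward0 /= -h_fix.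
have -> : iter n.+1 (taboo_op P S) h =
    taboo_op P S (fun k => step_reward P S c n k + beta * iter n.+1 (taboo_op P S) h k).
  by rewrite iterS; congr taboo_op; apply/funext => k; exact: IHn.
by rewrite taboo_op_lin -step_rewardS.
Qed.

Lemma disc_reward_partial_sum i n :
  series (fun t => beta ^+ t * \sum_j taboo_prob P S t i j * c j) n =
  h i - beta ^+ n * iter n (taboo_op P S) h i.
Proof.
elim: n => [|n IHn]; first by rewrite /series /= big_geq // expr0 mul1r subrr.
rewrite seriesSr IHn -/(step_reward P S c n i) (iter_taboo_op_fix n i) exprSr.
ring.
Qed.

Lemma disc_reward_fixpoint : stochastic P -> 0 <= beta < 1 ->
  forall i, disc_reward P beta S c i = h i.
Proof.
move=> P_stoch beta01 i.
have iter_bounded n k : `|iter n (taboo_op P S) h k| <= \sum_l `|h l|.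
  elim: n k => [|n IHn] k /=; last exact: taboo_op_bounded.
  by rewrite (bigD1 k) //= lerDl sumr_ge0.
have err_cvg0 := geometric_damping_cvg0 beta01 (fun n => iter_bounded n i).
rewrite /disc_reward; apply: cvg_lim => //.
rewrite (funext (disc_reward_partial_sum i)) -[X in _ --> X]subr0.
by apply: cvgB => //; exact: cvg_cst.
Qed.

End DiscountedReward.

Section LinearSystem.
Variables (R : realType) (N : finType) (P : N -> N -> R) (S : {set N}).
Variables (beta : R) (c a : N -> R).
Hypothesis P_stoch : stochastic P.
Hypothesis beta01 : 0 < beta < 1.

Hypothesis a_sol : forall i, a i = beta * c i + beta * \sum_(j in S) P i j * a j.

Let beta_neq0 : beta != 0.
Proof. by case/andP: beta01 => beta_gt0 _; rewrite gt_eqF. Qed.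

Let one_minus_beta_neq0 : 1 - beta != 0.
Proof. by case/andP: beta01 => _ beta_lt1; rewrite subr_eq0 eq_sym lt_eqF. Qed.

Lemma disc_reward_solution i : disc_reward P beta S c i = (i \in S)%:R * (a i / beta).
Proof.
have P_Sa j : beta * taboo_op P S (fun k => (k \in S)%:R * (a k / beta)) j =
    (j \in S)%:R * \sum_(k in S) P j k * a k.
  rewrite /taboo_op mulrCA; congr (_ * _).
  rewrite [RHS]big_mkcond mulr_sumr /=.
  by apply: eq_bigr => k _; case: (k \in S); rewrite /= ?mulr0n ?mulr1n ?mul0r ?mulr0 //; field.
apply: (disc_reward_fixpoint (h := fun k => (k \in S)%:R * (a k / beta))) => // [j|].
  by rewrite P_Sa -mulrDr; congr (_ * _); rewrite {1}a_sol; field.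
by case/andP: beta01 => /ltW -> ->.
Qed.

Lemma rS_solution i : rS P beta S c i = a i / beta - (i \in S)%:R * a i.
Proof.
rewrite /rS /fS disc_reward_solution.
under eq_bigr do rewrite disc_reward_solution.
have -> : beta * \sum_k P i k * ((k \in S)%:R * (a k / beta)) = \sum_(k in S) P i k * a k.
  rewrite mulr_sumr [RHS]big_mkcond; apply: eq_bigr => k _.
  by case: (k \in S); rewrite /= ?mulr0n ?mulr1n ?mul0r ?mulr0 //; field.
have -> : \sum_(k in S) P i k * a k = a i / beta - c i by rewrite a_sol; field.
by field.
Qed.

Definition solution_scale (i : N) : R := if i \in S then beta / (1 - beta) else beta.

Lemma solution_scale_neq0 i : solution_scale i != 0.
Proof.
by rewrite /solution_scale; case: (i \in S); rewrite // mulf_neq0 ?invr_eq0.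
Qed.

Lemma solution_rS i : a i = solution_scale i * rS P beta S c i.
Proof.
rewrite rS_solution /solution_scale; case: (i \in S); rewrite /= ?mulr0n ?mulr1n.
  by field; rewrite beta_neq0.
by field.
Qed.

End LinearSystem.

Theorem mainTheorem10 (R : realType) (N : finType) (P : N -> N -> R)
    (beta : R) (Rw : N -> R) (S : {set N}) (a b : N -> R) :
  stochastic P -> 0 < beta < 1 ->
  (forall i, a i = beta * Rw i + beta * \sum_(j in S) P i j * a j) ->
  (forall i, b i = beta + beta * \sum_(j in S) P i j * b j) ->
  (forall i, i \in S ->
     a i = beta * rS P beta S Rw i / (1 - beta) /\
     b i = beta * wS P beta S i / (1 - beta)) /\
  (forall i, i \notin S ->
     a i = beta * rS P beta S Rw i /\ b i = beta * wS P beta S i) /\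
  (forall i, a i / b i = nuS P beta S Rw i).
Proof.
move=> P_stoch beta01 a_sol b_sol.
(* b solves the same system for the unit reward, whose r^S is w^S. *)
have b_sol1 i : b i = beta * (fun=> 1) i + beta * \sum_(j in S) P i j * b j.
  by rewrite mulr1 b_sol.
have wS_rS i : wS P beta S i = rS P beta S (fun=> 1) i by [].
have a_rS := solution_rS P_stoch beta01 a_sol.
have b_rS := solution_rS P_stoch beta01 b_sol1.
split; [|split] => i.
- by move=> iS; rewrite a_rS b_rS wS_rS /solution_scale iS; split; apply: mulrAC.
- by move=> iS; rewrite a_rS b_rS wS_rS /solution_scale (negbTE iS).
- by rewrite a_rS b_rS /nuS wS_rS -mulf_div divff ?mul1r // solution_scale_neq0.
Qed.
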